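(* Let $n$ be an even positive integer, $\ell\ge 2$, and let $G$ be an $N$-AW graph on $n$ vertices with $|E(\overline{G})|=\frac{n}{2}+t$, where $t\ge 1$. Then the maximum degree of $\overline{G}$ is at most $t+1$.
   Context: All graphs are finite and simple; $\overline{G}$ is the complement. Labels lie in $\mathbb{Z}_\ell$. In the neighborhood Lights Out game, toggling a vertex $w$ adds $1$ (mod $\ell$) to the label of each vertex of the closed neighborhood $N[w]$; the game is won when all labels are $0$; a graph is $N$-AW if every initial labeling can be won. *)

From mathcomp Require Import all_boot all_order all_algebra.
Set Implicit Arguments. Unset Strict Implicit. Unset Printing Implicit Defensive.
Import GRing.Theory.
Local Open Scope ring_scope.

Definition simple_graph (T : finType) (adj : rel T) : Prop :=
  symmetric adj /\ irreflexive adj.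

Definition closed_nbhd (T : finType) (adj : rel T) (w : T) : {set T} :=
  [set v | (v == w) || adj w v].

Definition after_toggles (T : finType) (adj : rel T) (l : nat)
    (f : T -> 'Z_l) (s : seq T) (v : T) : 'Z_l :=
  f v + (count (fun w => v \in closed_nbhd adj w) s)%:R.

Definition N_AW (T : finType) (adj : rel T) (l : nat) : Prop :=
  forall f : T -> 'Z_l, exists s : seq T, forall v, after_toggles adj f s v = 0.

Definition compl_adj (T : finType) (adj : rel T) : rel T :=
  fun u v => (u != v) && ~~ adj u v.

Definition edge_set (T : finType) (adj : rel T) : {set {set T}} :=
  [set e : {set T} | [exists u, exists v, (adj u v) && (e == [set u; v])]].

Definition degree (T : finType) (adj : rel T) (v : T) : nat :=
  #|[set u | adj v u]|.

(* Fix a vertex v of the complement H of G and call x <> v pendant when its only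
   possible H-neighbour is v.  Which closed G-neighbourhoods contain a pendant x
   is determined by whether x and v are adjacent in H, so two distinct pendants
   with the same answer are twins in G; twins always receive the same increments,
   so putting label 1 on one of them and 0 elsewhere gives an unwinnable game.
   Hence there are at most two pendants.  Each of the remaining (at least n - 3)
   vertices other than v lies on an H-edge avoiding v, so as n is even there are
   at least n/2 - 1 such edges, and adding the deg v edges at v gives
   n/2 + t >= deg v + n/2 - 1. *)
From mathcomp Require Import all_boot all_order all_algebra.
From mathcomp Require Import zify.

Set Implicit Arguments.
Unset Strict Implicit.
Unset Printing Implicit Defensive.

Import GRing.Theory.

Lemma card_bigcup_le (T : finType) (P : {set {set T}}) :
  (#|\bigcup_(e in P) e| <= \sum_(e in P) #|e|)%N.
Proof.
elim/big_ind2: _ => // [|A a B b HA HB]; first by rewrite cards0.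
by rewrite (leq_trans (leq_card_setU _ _)) // leq_add.
Qed.

Lemma N_AW_closed_nbhd_inj (T : finType) (adj : rel T) (l : nat) (a b : T) :
  N_AW adj l ->
  (forall z, (a \in closed_nbhd adj z) = (b \in closed_nbhd adj z)) -> a = b.
Proof.
move=> AW twins; apply/eqP/negPn/negP => neq_ab.
have [s won] := AW (fun x => if x == a then 1%R else 0%R).
have := won a; have := won b.
rewrite /after_toggles eqxx eq_sym (negbTE neq_ab) add0r.
rewrite (eq_count (a2 := fun w => a \in closed_nbhd adj w)) => [->|z]; last first.
  by rewrite twins.
by rewrite addr0 => /eqP; rewrite oner_eq0.
Qed.

Section Edges.

Variables (T : finType) (g : rel T).

Definition edges_avoiding (v : T) : {set {set T}} :=
  [set e in edge_set g | v \notin e].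

Definition pendants (v : T) : {set T} :=
  [set x | (x != v) && [forall y, g x y ==> (y == v)]].

Lemma card_edges_cover_le (F : {set {set T}}) :
  F \subset edge_set g -> (#|\bigcup_(e in F) e| <= 2 * #|F|)%N.
Proof.
move=> /subsetP sub_F; rewrite (leq_trans (card_bigcup_le F)) //.
rewrite mulnC -sum_nat_const leq_sum // => e /sub_F.
rewrite inE => /existsP[x /existsP[y /andP[_ /eqP ->]]].
by rewrite cards2; case: (x != y).
Qed.

Lemma card_nonpendants_le (v : T) :
  (#|[set~ v] :\: pendants v| <= 2 * #|edges_avoiding v|)%N.
Proof.
rewrite /edges_avoiding setIdE.
apply: leq_trans (card_edges_cover_le (subsetIl _ _)).
apply/subset_leq_card/subsetP => x; rewrite !inE => /andP[].
rewrite negb_and negbK => /orP[-> //| /forallPn[y]] /=.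
rewrite negb_imply => /andP[gxy neq_yv] neq_xv.
apply/bigcupP; exists [set x; y]; last by rewrite set21.
rewrite !inE negb_or eq_sym neq_xv eq_sym neq_yv !andbT.
by apply/existsP; exists x; apply/existsP; exists y; rewrite gxy eqxx.
Qed.

Hypotheses (g_sym : symmetric g) (g_irr : irreflexive g).

Lemma card_edges_at (v : T) :
  #|[set e in edge_set g | v \in e]| = degree g v.
Proof.
have -> : [set e in edge_set g | v \in e] = [set [set v; u] | u in [set u | g v u]].
  apply/setP => e; rewrite !inE; apply/andP/imsetP => [[]|[u]].
    move=> /existsP[x /existsP[y /andP[gxy /eqP ->]]].
    rewrite !inE => /orP[] /eqP ->; first by exists y; rewrite ?inE.
    by exists x; rewrite ?inE 1?g_sym // setUC.
  rewrite inE => gvu ->; split; last by rewrite set21.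
  by apply/existsP; exists v; apply/existsP; exists u; rewrite gvu eqxx.
rewrite card_in_imset // => u u'; rewrite !inE => gvu _ eq_vu.
have : u \in [set v; u'] by rewrite -eq_vu set22.
rewrite !inE => /orP[/eqP eq_uv|/eqP //].
by move: gvu; rewrite eq_uv g_irr.
Qed.

Lemma card_edge_set_split (v : T) :
  #|edge_set g| = (degree g v + #|edges_avoiding v|)%N.
Proof.
rewrite -(cardsID [set e : {set T} | v \in e]) -card_edges_at setIdE.
by congr (_ + _); apply: eq_card => e; rewrite !inE andbC.
Qed.

End Edges.

Section Complement.

Variables (T : finType) (adj : rel T).
Hypothesis adj_sym : symmetric adj.

Local Notation H := (compl_adj adj).

Lemma compl_adj_sym : symmetric H.
Proof. by move=> x y; rewrite /compl_adj eq_sym adj_sym. Qed.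

Lemma compl_adj_irr : irreflexive H.
Proof. by move=> x; rewrite /compl_adj eqxx. Qed.

Lemma in_closed_nbhd_compl (a z : T) :
  (a \in closed_nbhd adj z) = (z == a) || ~~ H a z.
Proof.
rewrite /closed_nbhd inE /compl_adj.
by case: (eqVneq z a) => [-> //|_] /=; rewrite negbK adj_sym.
Qed.

Lemma in_closed_nbhd_pendant (v a z : T) :
  a \in pendants H v -> (a \in closed_nbhd adj z) = (z != v) || ~~ H a v.
Proof.
rewrite inE => /andP[neq_av /forallP nbrs_a].
rewrite in_closed_nbhd_compl.
case Hav: (H a v) => /=; last first.
  rewrite orbT; apply/orP; right; apply/negP => Haz.
  by move: (implyP (nbrs_a z) Haz) Hav => /eqP <-; rewrite Haz.
have -> : H a z = (z == v) by apply/idP/idP => [/(implyP (nbrs_a z))|/eqP ->].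
by case: (eqVneq z a) => [->|]; rewrite ?neq_av ?orbT ?orbF.
Qed.

Lemma N_AW_card_pendants (l : nat) (v : T) :
  N_AW adj l -> (#|pendants H v| <= 2)%N.
Proof.
move=> AW; rewrite -[2%N]card_bool.
apply: (@leq_card_in _ _ (fun x => H x v)) => a b pend_a pend_b eq_ab.
apply: (N_AW_closed_nbhd_inj AW) => z.
by rewrite (in_closed_nbhd_pendant _ pend_a) (in_closed_nbhd_pendant _ pend_b) eq_ab.
Qed.

End Complement.

Theorem lemma4p11 (T : finType) (adj : rel T) (l n t : nat) :
  simple_graph adj ->
  #|T| = n -> (0 < n)%N -> ~~ odd n ->
  (2 <= l)%N ->
  N_AW adj l ->
  #|edge_set (compl_adj adj)| = (n %/ 2 + t)%N ->
  (1 <= t)%N ->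
  forall v : T, (degree (compl_adj adj) v <= t + 1)%N.
Proof.
move=> [adj_sym _] card_T n_gt0 n_even _ AW card_E _ v.
have := card_edge_set_split (compl_adj_sym adj_sym) (compl_adj_irr adj) v.
have := card_nonpendants_le (compl_adj adj) v.
have := N_AW_card_pendants adj_sym v AW.
have := cardsID (pendants (compl_adj adj) v) [set~ v].
have := subset_leq_card (subsetIr [set~ v] (pendants (compl_adj adj) v)).
have := modn2 n; rewrite (negbTE n_even) /= cardsC1 card_T card_E.
lia.
Qed.
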